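(* Let $\mathbb{F}$ be a field and let $q\in\mathbb{F}$ be a root of unity with $q\neq 1$; let $p\geq 2$ be the least positive integer with $q^p=1$. Let $\mathcal{H}$ be the unital associative $\mathbb{F}$-algebra generated by $A,B$ subject to $AB-qBA=I$, with $[f,g]=fg-gf$ and $\Lambda:=AB-BA$. Let $\mathcal{L}$ be the Lie subalgebra of $\mathcal{H}$ generated by $A,B$, and let $\mathcal{N}$ be the linear subspace spanned by all $B^m\Lambda^n$ and $\Lambda^nA^m$ with $m,n$ positive integers both congruent to $0$ modulo $p$. Then the sum $\mathcal{L}+\mathcal{N}$ is direct, i.e. $\mathcal{L}\cap\mathcal{N}=\{0\}$.
   Context: The elements $\Lambda^k$, $\Lambda^kA^l$, $B^l\Lambda^k$ ($k\geq 0$, $l\geq 1$ integers, $\Lambda^0=I$) form a basis of $\mathcal{H}$. *)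

From HB Require Import structures.
From mathcomp Require Import all_boot all_order all_algebra.
Set Implicit Arguments. Unset Strict Implicit. Unset Printing Implicit Defensive.
Import GRing.Theory.
Local Open Scope ring_scope.

Definition comm {R : pzRingType} (f g : R) : R := f * g - g * f.

Definition in_gen_alg {F : fieldType} {H : algType F} (A B x : H) : Prop :=
  forall S : H -> Prop, S 1 -> S A -> S B ->
    (forall u v, S u -> S v -> S (u + v)) ->
    (forall (c : F) u, S u -> S (c *: u)) ->
    (forall u v, S u -> S v -> S (u * v)) -> S x.

(* (H, A, B) is the unital associative F-algebra generated by A, B
   subject to AB - qBA = I, i.e. it is generated by A, B, satisfies the
   relation, and is universal among F-algebras with such a pair. *)
Definition is_qHeisenberg (F : fieldType) (q : F) (H : algType F) (A B : H) : Prop :=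
  [/\ A * B - q *: (B * A) = 1,
      (forall x : H, in_gen_alg A B x) &
      (forall (R : algType F) (a b : R), a * b - q *: (b * a) = 1 ->
         exists f : H -> R,
           (forall u v, f (u + v) = f u + f v) /\
           (forall (c : F) u, f (c *: u) = c *: f u) /\
           (forall u v, f (u * v) = f u * f v) /\
           f 1 = 1 /\ f A = a /\ f B = b)].

Definition in_Lie_gen {F : fieldType} {H : algType F} (A B x : H) : Prop :=
  forall S : H -> Prop, S A -> S B ->
    (forall u v, S u -> S v -> S (u + v)) ->
    (forall (c : F) u, S u -> S (c *: u)) ->
    (forall u v, S u -> S v -> S (comm u v)) -> S x.

Definition in_N {F : fieldType} {H : algType F} (p : nat) (A B x : H) : Prop :=
  let L := A * B - B * A in
  forall S : H -> Prop, S 0 ->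
    (forall m n : nat, (0 < m)%N -> (0 < n)%N -> (p %| m)%N -> (p %| n)%N ->
        S (B ^+ m * L ^+ n) /\ S (L ^+ n * A ^+ m)) ->
    (forall u v, S u -> S v -> S (u + v)) ->
    (forall (c : F) u, S u -> S (c *: u)) -> S x.

(* Let p be the order of q and K the field of fractions of F[z][s].  Sending
   B and A to weighted cyclic shifts j -> j + 1 and j -> j - 1 of K^p, with
   weights chosen so that AB and BA become diag(e_(j+1)) and diag(e_j) for
   e_j = (q^j z - 1)/(q - 1), respects AB - qBA = 1, hence extends to an
   algebra map rho : H -> M_p(K).  Then rho(Lambda) = diag(q^j z), and
   rho(B^p) = s, rho(A^p) = E/s with E = prod_j e_j, and rho(Lambda^p) = z^p
   are scalar, so every element of N is sent to a scalar matrix tau I.  On the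
   other hand rho(A), rho(B) and all commutators are traceless, so every
   element of L is sent to a traceless matrix.  On L /\ N this gives p tau = 0,
   hence tau = 0 as p is invertible in F; and the scalars s^i z^(pj) and
   z^(pj) (E/s)^i (i, j >= 1) are linearly independent over F, so all
   coefficients of the element vanish. *)

From HB Require Import structures.
From mathcomp Require Import all_boot all_order all_algebra.
From mathcomp Require Import ring zify.
Import GRing.Theory.
Local Open Scope ring_scope.
Set Implicit Arguments. Unset Strict Implicit. Unset Printing Implicit Defensive.

Section RestrictScalars.
Variables (F : nzRingType) (K : comNzRingType).

(* [phi] does not occur in the body: it only keys the F-algebra instance. *)
Definition mx_over (phi : {rmorphism F -> K}) (n : nat) : Type := 'M[K]_n.+1.

Variables (phi : {rmorphism F -> K}) (n : nat).
Local Notation M := (mx_over phi n).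

HB.instance Definition _ := GRing.NzRing.on M.

Definition mx_over_scale (a : F) (X : M) : M := phi a *: (X : 'M[K]_n.+1).

Lemma mx_over_scaleA a b X : mx_over_scale a (mx_over_scale b X) = mx_over_scale (a * b) X.
Proof. by rewrite /mx_over_scale scalerA rmorphM. Qed.

Lemma mx_over_scale1 : left_id 1 mx_over_scale.
Proof. by move=> X; rewrite /mx_over_scale rmorph1 scale1r. Qed.

Lemma mx_over_scaleDr : right_distributive mx_over_scale +%R.
Proof. by move=> a X Y; rewrite /mx_over_scale scalerDr. Qed.

Lemma mx_over_scaleDl X : {morph mx_over_scale^~ X : a b / a + b}.
Proof. by move=> a b; rewrite /mx_over_scale rmorphD scalerDl. Qed.

HB.instance Definition _ := GRing.Zmodule_isLmodule.Build F M
  mx_over_scaleA mx_over_scale1 mx_over_scaleDr mx_over_scaleDl.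

Lemma mx_over_scaleAl (a : F) (X Y : M) : a *: (X * Y) = (a *: X) * Y.
Proof. exact: scalemxAl. Qed.

HB.instance Definition _ := GRing.Lmodule_isLalgebra.Build F M mx_over_scaleAl.

Lemma mx_over_scaleAr (a : F) (X Y : M) : a *: (X * Y) = X * (a *: Y).
Proof. exact: scalemxAr. Qed.

HB.instance Definition _ := GRing.Lalgebra_isAlgebra.Build F M mx_over_scaleAr.

Lemma scale_mx_overE (a : F) (X : M) : a *: X = phi a *: (X : 'M_n.+1).
Proof. by []. Qed.

Lemma mxtrace_over_scale (a : F) (X : M) :
  \tr (a *: X : 'M_n.+1) = phi a * \tr (X : 'M_n.+1).
Proof. exact: mxtraceZ. Qed.

End RestrictScalars.

Section AlgebraMap.
Variables (H R : pzRingType) (f : H -> R).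
Hypotheses (fD : forall u v, f (u + v) = f u + f v)
  (fM : forall u v, f (u * v) = f u * f v) (f1 : f 1 = 1).

Let f_zmod : zmod_morphism f.
Proof. by move=> u v; apply: (addIr (f v)); rewrite -fD !subrK. Qed.

Let f_monoid : monoid_morphism f.
Proof. by split. Qed.

Definition rmorphism_of : {rmorphism H -> R} :=
  HB.pack f (GRing.isZmodMorphism.Build H R f f_zmod)
    (GRing.isMonoidMorphism.Build H R f f_monoid).

End AlgebraMap.

Section WeightedShift.
Variables (K : comNzRingType) (n : nat).
Local Notation I := 'I_n.+1.

Definition wshift (f : I -> K) (k : I) : 'M[K]_n.+1 :=
  \matrix_(i, j) (if i == j + k then f j else 0).

Lemma eq_wshift f g k : f =1 g -> wshift f k = wshift g k.
Proof. by move=> fg; apply/matrixP => i j; rewrite !mxE fg. Qed.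

Lemma wshift_scalar c : wshift (fun=> c) 0 = c%:M.
Proof. by apply/matrixP => i j; rewrite !mxE addr0 eq_sym; case: eqP. Qed.

Lemma mul_wshift f g k l :
  wshift f k *m wshift g l = wshift (fun j => f (j + l) * g j) (l + k).
Proof.
apply/matrixP => i j; rewrite !mxE (bigD1 (j + l)) //= big1 ?addr0.
  by rewrite !mxE eqxx addrA; case: eqP; rewrite ?mulr1 ?mul0r.
by move=> t /negbTE tl; rewrite !mxE tl mulr0.
Qed.

Lemma add_wshift f g k : wshift f k + wshift g k = wshift (f \+ g) k.
Proof. by apply/matrixP => i j; rewrite !mxE; case: eqP; rewrite ?addr0. Qed.

Lemma opp_wshift f k : - wshift f k = wshift (fun j => - f j) k.
Proof. by apply/matrixP => i j; rewrite !mxE; case: eqP; rewrite ?oppr0. Qed.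

Lemma scale_wshift c f k : c *: wshift f k = wshift (fun j => c * f j) k.
Proof. by apply/matrixP => i j; rewrite !mxE; case: eqP; rewrite ?mulr0. Qed.

Lemma exp_wshift f k N :
  wshift f k ^+ N = wshift (fun j => \prod_(l < N) f (j + k *+ l)) (k *+ N).
Proof.
elim: N => [|N IHN].
  rewrite expr0 mulr0n -[1]/(1%:M) -wshift_scalar.
  by apply: eq_wshift => j; rewrite big_ord0.
rewrite exprSr IHN -mulmxE mul_wshift -mulrS; apply: eq_wshift => j.
by rewrite big_ord_recl mulr0n addr0 mulrC; under [in RHS]eq_bigr do rewrite mulrS addrA.
Qed.

Lemma Zp_mulrn_order (k : I) : k *+ n.+1 = 0.
Proof. by apply: val_inj; rewrite Zp_mulrn /= modnMl. Qed.

Lemma mxtrace_wshift f k : k != 0 -> \tr (wshift f k) = 0.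
Proof.
move=> k0; apply: big1 => j _; rewrite mxE -[X in X == _]addr0 (inj_eq (addrI j)).
by rewrite eq_sym (negbTE k0).
Qed.

End WeightedShift.

Section CyclicShift.
Variables (K : comNzRingType) (n : nat).

Lemma exp_wshift1_order (f : 'I_n.+2 -> K) : wshift f 1 ^+ n.+2 = (\prod_j f j)%:M.
Proof.
rewrite exp_wshift Zp_mulrn_order -wshift_scalar; apply: eq_wshift => j.
rewrite [RHS](reindex_inj (addrI j)) /=.
by apply: eq_bigr => l _; rewrite natr_Zp.
Qed.

Lemma exp_wshiftN1_order (f : 'I_n.+2 -> K) : wshift f (-1) ^+ n.+2 = (\prod_j f j)%:M.
Proof.
rewrite exp_wshift Zp_mulrn_order -wshift_scalar; apply: eq_wshift => j.
rewrite [RHS](reindex_inj (subrI j)) /=.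
by apply: eq_bigr => l _; rewrite mulNrn natr_Zp.
Qed.

End CyclicShift.

Section MonomialSums.
Variable R : nzRingType.

Lemma coef_sum_scale_Xn (r : seq nat) (g : nat -> R) (k : nat -> nat) i :
  uniq r -> {in r &, injective k} -> i \in r ->
  (\sum_(j <- r) g j *: 'X^(k j))`_(k i) = g i.
Proof.
move=> r_uniq k_inj ir; rewrite coef_sum (bigD1_seq i) //= coefZ coefXn eqxx mulr1.
rewrite big1_seq ?addr0 // => j /andP[ji jr]; rewrite coefZ coefXn.
by rewrite (inj_in_eq k_inj) // eq_sym (negbTE ji) mulr0.
Qed.

Lemma coef_sum_scale_Xn_out (r : seq nat) (g : nat -> R) (k : nat -> nat) e :
  {in r, forall j, k j != e} -> (\sum_(j <- r) g j *: 'X^(k j))`_e = 0.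
Proof.
move=> ke; rewrite coef_sum big1_seq // => j /andP[_ jr].
by rewrite coefZ coefXn eq_sym (negbTE (ke j jr)) mulr0.
Qed.

End MonomialSums.

Section NSpan.
Variables (F : fieldType) (H : algType F) (p : nat) (A B : H).
Local Notation L := (A * B - B * A).

Definition monoB i j := B ^+ (p * i.+1) * L ^+ (p * j.+1).
Definition monoA i j := L ^+ (p * j.+1) * A ^+ (p * i.+1).

Definition Nsum M (c d : nat -> nat -> F) : H :=
  \sum_(0 <= i < M) \sum_(0 <= j < M) (c i j *: monoB i j + d i j *: monoA i j).

Definition pad M (c : nat -> nat -> F) i j := if (i < M)%N && (j < M)%N then c i j else 0.

Lemma Nsum_widen M M' c d : (M <= M')%N -> Nsum M c d = Nsum M' (pad M c) (pad M d).
Proof.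
move=> MM'; rewrite /Nsum (big_nat_widen _ _ _ _ _ MM') big_mkcondr.
apply: eq_bigr => i _; rewrite (big_nat_widen _ _ _ _ _ MM') big_mkcondr /pad.
case: (i < M)%N => /=; last by rewrite big1 // => j _; rewrite !scale0r addr0.
by apply: eq_bigr => j _; case: (j < M)%N; rewrite ?scale0r ?addr0.
Qed.

Lemma Nsum_add M c1 d1 c2 d2 :
  Nsum M c1 d1 + Nsum M c2 d2 =
  Nsum M (fun i j => c1 i j + c2 i j) (fun i j => d1 i j + d2 i j).
Proof.
rewrite /Nsum -big_split; apply: eq_bigr => i _; rewrite -big_split.
by apply: eq_bigr => j _; rewrite !scalerDl addrACA.
Qed.

Lemma Nsum_scale a M c d :
  a *: Nsum M c d = Nsum M (fun i j => a * c i j) (fun i j => a * d i j).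
Proof.
rewrite /Nsum scaler_sumr; apply: eq_bigr => i _; rewrite scaler_sumr.
by apply: eq_bigr => j _; rewrite scalerDr !scalerA.
Qed.

Lemma Nsum_eq0 M c d :
  (forall i j, (i < M)%N -> (j < M)%N -> c i j = 0 /\ d i j = 0) -> Nsum M c d = 0.
Proof.
move=> cd0; apply: big1_seq => i /andP[_]; rewrite mem_index_iota => /andP[_ iM].
apply: big1_seq => j /andP[_]; rewrite mem_index_iota => /andP[_ jM].
by have [-> ->] := cd0 i j iM jM; rewrite !scale0r addr0.
Qed.

Definition delta2 (i0 j0 i j : nat) : F := ((i == i0) && (j == j0))%:R.

Lemma sum_delta2 (V : lmodType F) M i0 j0 (G : nat -> nat -> V) :
  (i0 < M)%N -> (j0 < M)%N ->
  \sum_(0 <= i < M) \sum_(0 <= j < M) delta2 i0 j0 i j *: G i j = G i0 j0.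
Proof.
move=> i0M j0M.
rewrite (bigD1_seq i0) ?mem_index_iota ?iota_uniq //= [X in _ + X]big1 ?addr0; last first.
  by move=> i /negbTE i0i; rewrite big1 // => j _; rewrite /delta2 i0i scale0r.
rewrite (bigD1_seq j0) ?mem_index_iota ?iota_uniq //= [X in _ + X]big1 ?addr0.
  by rewrite /delta2 !eqxx scale1r.
by move=> j /negbTE j0j; rewrite /delta2 j0j andbF scale0r.
Qed.

Lemma monoB_Nsum i j : monoB i j = Nsum (maxn i j).+1 (delta2 i j) (fun _ _ => 0).
Proof.
rewrite -(sum_delta2 (M := (maxn i j).+1) monoB (leq_maxl i j) (leq_maxr i j)).
by apply: eq_bigr => i' _; apply: eq_bigr => j' _; rewrite scale0r addr0.
Qed.

Lemma monoA_Nsum i j : monoA i j = Nsum (maxn i j).+1 (fun _ _ => 0) (delta2 i j).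
Proof.
rewrite -(sum_delta2 (M := (maxn i j).+1) monoA (leq_maxl i j) (leq_maxr i j)).
by apply: eq_bigr => i' _; apply: eq_bigr => j' _; rewrite scale0r add0r.
Qed.

Lemma in_N_Nsum x : in_N p A B x -> exists M c d, x = Nsum M c d.
Proof.
move=> xN; apply: (xN (fun y => exists M c d, y = Nsum M c d)).
- by exists 0%N, (fun _ _ => 0), (fun _ _ => 0); rewrite /Nsum big_geq.
- move=> m n m0 n0 /dvdnP[i mE] /dvdnP[j nE]; subst m n.
  case: i j m0 n0 => [|i] [|j]; rewrite ?mul0n // => _ _.
  rewrite ![(_.+1 * p)%N]mulnC; split.
  + by exists (maxn i j).+1, (delta2 i j), (fun _ _ => 0); rewrite -monoB_Nsum.
  + by exists (maxn i j).+1, (fun _ _ => 0), (delta2 i j); rewrite -monoA_Nsum.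
- move=> _ _ [M1 [c1 [d1 ->]]] [M2 [c2 [d2 ->]]].
  rewrite (Nsum_widen _ _ (leq_maxl M1 M2)) (Nsum_widen _ _ (leq_maxr M1 M2)) Nsum_add.
  by do 3!eexists.
- by move=> a _ [M [c [d ->]]]; rewrite Nsum_scale; do 3!eexists.
Qed.

End NSpan.

Lemma in_Lie_gen_mxtrace (F : fieldType) (K : comNzRingType) (phi : {rmorphism F -> K})
    (n : nat) (H : algType F) (A B : H) (rho : {rmorphism H -> mx_over phi n}) x :
  scalable rho -> \tr (rho A : 'M_n.+1) = 0 -> \tr (rho B : 'M_n.+1) = 0 ->
  in_Lie_gen A B x -> \tr (rho x : 'M_n.+1) = 0.
Proof.
move=> rhoZ trA trB xL; apply: (xL (fun y => \tr (rho y : 'M_n.+1) = 0)) => //.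
- by move=> u v tru trv; rewrite rmorphD mxtraceD tru trv addr0.
- by move=> c u tru; rewrite rhoZ mxtrace_over_scale tru mulr0.
- move=> u v _ _; rewrite /comm rmorphB !rmorphM -!mulmxE.
  by rewrite linearB /= mxtrace_mulC subrr.
Qed.

Section QHeisenbergMatrices.
Variables (F : fieldType) (q : F) (n : nat).
Hypothesis q_prim : n.+2.-primitive_root q.
Local Notation p := n.+2.
Local Notation K := {fraction {poly {poly F}}}.

Definition inK_poly : {rmorphism {poly F} -> K} := @tofrac _ \o polyC.
Definition inK : {rmorphism F -> K} := inK_poly \o polyC.

Definition s : K := tofrac 'X.
Definition z : K := inK_poly 'X.

Definition qint (j : nat) : {poly F} := (q - 1)^-1 *: (q ^+ j *: 'X - 1).

Lemma q_neq1 : q != 1.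
Proof. by rewrite -(prim_order_dvd q_prim 1) dvdn1. Qed.

Lemma qint_mod j : qint (j %% p) = qint j.
Proof. by rewrite /qint (prim_expr_mod q_prim). Qed.

Lemma qintS_sub j : qint j.+1 - q *: qint j = 1.
Proof.
transitivity (((q - 1)^-1 * (q - 1))%:P : {poly F}); last by rewrite mulVf ?subr_eq0 ?q_neq1.
by rewrite /qint -!mul_polyC exprS !polyCM polyCB; ring.
Qed.

Lemma qintS_subq j : qint j.+1 - qint j = q ^+ j *: 'X.
Proof.
transitivity (((q - 1)^-1 * (q - 1))%:P * (q ^+ j *: 'X)).
  by rewrite /qint -!mul_polyC exprS !polyCM polyCB; ring.
by rewrite mulVf ?subr_eq0 ?q_neq1 // mul1r.
Qed.

Lemma qint_neq0 j : qint j != 0.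
Proof.
apply/eqP => /(congr1 (horner^~ 0)); rewrite /qint !hornerE /=.
by apply/eqP; rewrite mulf_eq0 invr_eq0 subr_eq0 (negbTE q_neq1) oppr_eq0 oner_eq0.
Qed.

Definition ediag (j : 'I_p) : K := inK_poly (qint j).

(* The weights satisfy awt (j + 1) * bwt j = ediag (j + 1) and
   bwt (j - 1) * awt j = ediag j, making AB and BA diagonal; placing the
   indeterminate s at a single position gives B^p = s and A^p = alpha. *)
Definition bwt (j : 'I_p) : K := if j == -1 then s else 1.
Definition awt (j : 'I_p) : K := ediag j / bwt (j - 1).

Definition Bmx : mx_over inK n.+1 := wshift bwt 1.
Definition Amx : mx_over inK n.+1 := wshift awt (-1).

Lemma ediagS (j : 'I_p) : ediag (j + 1) = inK_poly (qint j.+1).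
Proof.
rewrite /ediag; have -> : nat_of_ord (j + 1) = (j.+1 %% p)%N by rewrite /= modnDmr addn1.
by rewrite qint_mod.
Qed.

Lemma s_neq0 : s != 0.
Proof. by rewrite tofrac_eq0 polyX_eq0. Qed.

Lemma bwt_neq0 j : bwt j != 0.
Proof. by rewrite /bwt; case: ifP => _; [exact: s_neq0 | exact: oner_neq0]. Qed.

Lemma mulmx_AB : (Amx : 'M_p) *m Bmx = wshift (fun j => ediag (j + 1)) 0.
Proof.
rewrite mul_wshift addrN; apply: eq_wshift => j.
by rewrite /awt addrK divfK ?bwt_neq0.
Qed.

Lemma mulmx_BA : (Bmx : 'M_p) *m Amx = wshift ediag 0.
Proof.
rewrite mul_wshift addNr; apply: eq_wshift => j.
by rewrite /awt mulrC divfK ?bwt_neq0.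
Qed.

Lemma Amx_Bmx_rel : Amx * Bmx - q *: (Bmx * Amx) = 1.
Proof.
rewrite -!mulmxE mulmx_AB mulmx_BA scale_mx_overE scale_wshift opp_wshift add_wshift.
rewrite -[1 : mx_over _ _]/((1 : K)%:M : 'M_p) -wshift_scalar; apply: eq_wshift => j /=.
rewrite ediagS -[tofrac _ * _]/(inK_poly q%:P * inK_poly (qint j)) -rmorphM -rmorphB.
by rewrite mul_polyC qintS_sub rmorph1.
Qed.

Lemma comm_Amx_Bmx :
  Amx * Bmx - Bmx * Amx = wshift (fun j => inK (q ^+ j) * z) 0 :> 'M_p.
Proof.
rewrite -!mulmxE mulmx_AB mulmx_BA opp_wshift add_wshift; apply: eq_wshift => j /=.
by rewrite ediagS -rmorphB qintS_subq -mul_polyC rmorphM.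
Qed.

Lemma mxtrace_Amx : \tr (Amx : 'M_p) = 0.
Proof. by apply: mxtrace_wshift; rewrite oppr_eq0 oner_eq0. Qed.

Lemma mxtrace_Bmx : \tr (Bmx : 'M_p) = 0.
Proof. by apply: mxtrace_wshift; rewrite oner_eq0. Qed.

Definition alpha : K := (\prod_j ediag j) / s.

Lemma prod_bwt : \prod_j bwt j = s.
Proof. by rewrite (bigD1 (-1)) //= big1 ?mulr1 /bwt ?eqxx // => j /negbTE ->. Qed.

Lemma expBmx_order : Bmx ^+ p = s%:M.
Proof. by rewrite exp_wshift1_order prod_bwt. Qed.

Lemma expAmx_order : Amx ^+ p = alpha%:M.
Proof.
rewrite exp_wshiftN1_order /awt prodf_div /alpha -prod_bwt.
by rewrite [\prod_j bwt j](reindex_inj (addIr (-1))).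
Qed.

Lemma expLmx_order : (Amx * Bmx - Bmx * Amx) ^+ p = (z ^+ p)%:M.
Proof.
rewrite comm_Amx_Bmx exp_wshift mul0rn -wshift_scalar; apply: eq_wshift => j.
rewrite (eq_bigr (fun=> inK (q ^+ j) * z)) => [|l _]; last by rewrite mul0rn addr0.
rewrite prodr_const card_ord exprMn -rmorphXn exprAC (prim_expr_order q_prim).
by rewrite expr1n rmorph1 mul1r.
Qed.

Lemma mxtrace_scalar_eq0 (a : K) : \tr (a%:M : 'M_p) = 0 -> a = 0.
Proof.
have p_neq0 : p%:R != 0 :> K.
  by rewrite -(rmorph_nat inK) fmorph_eq0 (prim_root_natf_neq0 q_prim).
by rewrite mxtrace_scalar -mulr_natr => /eqP; rewrite mulf_eq0 (negbTE p_neq0) orbF => /eqP.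
Qed.

Definition Nscalar M (c d : nat -> nat -> F) : K :=
  \sum_(0 <= i < M) \sum_(0 <= j < M)
    (inK (c i j) * (s ^+ i.+1 * z ^+ (p * j.+1))
     + inK (d i j) * (z ^+ (p * j.+1) * alpha ^+ i.+1)).

Section Representation.
Variables (H : algType F) (A B : H) (rho : {rmorphism H -> mx_over inK n.+1}).
Hypotheses (rhoZ : scalable rho) (rhoA : rho A = Amx) (rhoB : rho B = Bmx).

Let rhoL : rho (A * B - B * A) = Amx * Bmx - Bmx * Amx.
Proof. by rewrite rmorphB !rmorphM rhoA rhoB. Qed.

Lemma rho_monoB i j : rho (monoB p A B i j) = (s ^+ i.+1 * z ^+ (p * j.+1))%:M.
Proof.
rewrite /monoB rmorphM !rmorphXn rhoL rhoB !exprM expBmx_order expLmx_order.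
by rewrite -!(rmorphXn (@scalar_mx K p)) -rmorphM.
Qed.

Lemma rho_monoA i j : rho (monoA p A B i j) = (z ^+ (p * j.+1) * alpha ^+ i.+1)%:M.
Proof.
rewrite /monoA rmorphM !rmorphXn rhoL rhoA !exprM expAmx_order expLmx_order.
by rewrite -!(rmorphXn (@scalar_mx K p)) -rmorphM.
Qed.

Lemma rho_Nsum M c d : rho (Nsum p A B M c d) = (Nscalar M c d)%:M.
Proof.
rewrite /Nsum /Nscalar rmorph_sum raddf_sum; apply: eq_bigr => i _.
rewrite rmorph_sum raddf_sum; apply: eq_bigr => j _.
by rewrite rmorphD !rhoZ rho_monoB rho_monoA !scale_mx_overE !scale_scalar_mx raddfD.
Qed.

End Representation.

Definition zsum M (g : nat -> F) : {poly F} := \sum_(0 <= j < M) g j *: 'X^(p * j.+1).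

Lemma inK_poly_zsum M g :
  inK_poly (zsum M g) = \sum_(0 <= j < M) inK (g j) * z ^+ (p * j.+1).
Proof. by rewrite rmorph_sum; apply: eq_bigr => j _; rewrite -mul_polyC rmorphM rmorphXn. Qed.

Lemma zsum_eq0 M g : zsum M g = 0 -> forall j, (j < M)%N -> g j = 0.
Proof.
move=> g0 j jM; have k_inj : {in index_iota 0 M &, injective (fun j => p * j.+1)%N}.
  by move=> j1 j2 _ _ /eqP; rewrite eqn_pmul2l // => /eqP [].
have jI : j \in index_iota 0 M by rewrite mem_index_iota.
by rewrite -(coef_sum_scale_Xn g (iota_uniq 0 (M - 0)) k_inj jI) -/(zsum M g) g0 coef0.
Qed.

Definition qint_prod : {poly F} := \prod_(j : 'I_p) qint j.

Lemma qint_prod_neq0 : qint_prod != 0.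
Proof. by apply/prodf_neq0 => j _; exact: qint_neq0. Qed.

(* s ^+ M * Nscalar M c d, with the denominators s ^+ i.+1 of alpha ^+ i.+1
   cleared: the two families land on the distinct powers s ^+ (M + i.+1) and
   s ^+ (M - i.+1). *)
Definition Npoly M (c d : nat -> nat -> F) : {poly {poly F}} :=
  \sum_(0 <= i < M) zsum M (c i) *: 'X^(M + i.+1)
  + \sum_(0 <= i < M) (qint_prod ^+ i.+1 * zsum M (d i)) *: 'X^(M - i.+1).

Lemma tofrac_scale_Xn (P : {poly F}) k : tofrac (P *: 'X^k) = inK_poly P * s ^+ k.
Proof. by rewrite -mul_polyC rmorphM rmorphXn. Qed.

Lemma tofrac_Npoly M c d : tofrac (Npoly M c d) = s ^+ M * Nscalar M c d.
Proof.
rewrite /Npoly /Nscalar rmorphD !rmorph_sum mulr_sumr.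
under [RHS]eq_bigr do rewrite big_split mulrDr.
rewrite big_split; congr (_ + _); apply: eq_big_nat => i /andP[_ iM].
  rewrite [LHS]/= tofrac_scale_Xn inK_poly_zsum mulr_suml mulr_sumr.
  by apply: eq_bigr => j _; rewrite exprD; ring.
have sM : s ^+ M = s ^+ (M - i.+1) * s ^+ i.+1 by rewrite -exprD subnK.
have Es : inK_poly qint_prod ^+ i.+1 = alpha ^+ i.+1 * s ^+ i.+1.
  by rewrite /alpha /qint_prod rmorph_prod expr_div_n divfK // expf_neq0 // s_neq0.
rewrite [LHS]/= tofrac_scale_Xn rmorphM rmorphXn Es inK_poly_zsum.
rewrite mulr_sumr mulr_suml mulr_sumr.
by apply: eq_bigr => j _; rewrite sM; ring.
Qed.

Lemma Npoly_eq0 M c d : Npoly M c d = 0 ->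
  forall i, (i < M)%N -> zsum M (c i) = 0 /\ zsum M (d i) = 0.
Proof.
move=> P0 i iM; have iI : i \in index_iota 0 M by rewrite mem_index_iota.
have r_uniq := iota_uniq 0 (M - 0).
have up_inj : {in index_iota 0 M &, injective (fun j => M + j.+1)%N}.
  by move=> j1 j2 _ _ /addnI [].
have down_inj : {in index_iota 0 M &, injective (fun j => M - j.+1)%N}.
  by move=> j1 j2; rewrite !mem_index_iota => /andP[_ ?] /andP[_ ?]; lia.
split.
- have := congr1 (fun P : {poly {poly F}} => P`_(M + i.+1)) P0; rewrite coefD coef0.
  rewrite (coef_sum_scale_Xn _ r_uniq up_inj iI) coef_sum_scale_Xn_out ?addr0 //.
  by move=> j; rewrite mem_index_iota => /andP[_ ?]; apply/eqP; lia.
- have := congr1 (fun P : {poly {poly F}} => P`_(M - i.+1)) P0; rewrite coefD coef0.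
  rewrite (coef_sum_scale_Xn _ r_uniq down_inj iI) coef_sum_scale_Xn_out ?add0r; last first.
    by move=> j _; apply/eqP; lia.
  by move/eqP; rewrite mulf_eq0 expf_eq0 (negbTE qint_prod_neq0) andbF => /eqP.
Qed.

Lemma Nscalar_eq0 M c d : Nscalar M c d = 0 ->
  forall i j, (i < M)%N -> (j < M)%N -> c i j = 0 /\ d i j = 0.
Proof.
move=> t0 i j iM jM.
have P0 : Npoly M c d = 0 by apply/eqP; rewrite -tofrac_eq0 tofrac_Npoly t0 mulr0.
by have [/zsum_eq0 -> // /zsum_eq0 -> //] := Npoly_eq0 P0 iM.
Qed.

End QHeisenbergMatrices.

Theorem corollary1 (F : fieldType) (q : F) (p : nat)
  (hp : (1 < p)%N) (hq : p.-primitive_root q)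
  (H : algType F) (A B : H) (hH : is_qHeisenberg q A B) :
  forall x : H, in_Lie_gen A B x -> in_N p A B x -> x = 0.
Proof.
case: p hp hq => [|[|n]] // _ hq.
have [_ _ /(_ _ _ _ (Amx_Bmx_rel hq))[f [fD [fZ [fM [f1 [fA fB]]]]]]] := hH.
pose rho := rmorphism_of fD fM f1.
have rhoZ : scalable rho := fZ.
have rhoA : rho A = Amx q n := fA.
have rhoB : rho B = Bmx F n := fB.
move=> x xL /in_N_Nsum[M [c [d xE]]].
have := in_Lie_gen_mxtrace rhoZ _ _ xL.
rewrite rhoA rhoB mxtrace_Amx mxtrace_Bmx xE (rho_Nsum hq rhoZ rhoA rhoB).
by move=> /(_ erefl erefl)/(mxtrace_scalar_eq0 hq)/(Nscalar_eq0 hq)/Nsum_eq0.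
Qed.
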